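(* Let $T$ be a tree, let $G$ be the graph obtained from $T$ by adding a new vertex $w$ adjacent to all vertices of $T$, and let $b\ge1$. If $\mathrm{bw}(T)\le b$, then $G$ is outer $(5b-5)$-planar.
   Context: For a linear order $\sigma\colon V(T)\to[n]$, the stretch of an edge $\{u,v\}$ is $|\sigma(u)-\sigma(v)|$; the bandwidth $\mathrm{bw}(T)$ is the minimum over all $\sigma$ of the maximum stretch of an edge. A circular drawing is a cyclic order $(v_1,\dots,v_n)$ of the vertices; edges $\{v_i,v_j\}$ ($i<j$) and $\{v_{i'},v_{j'}\}$ ($i'<j'$) cross if $i<i'<j<j'$ or $i'<i<j'<j$; a graph is outer $k$-planar if it has a circular drawing in which every edge crosses at most $k$ edges. *)

From mathcomp Require Import all_boot all_order.
Set Implicit Arguments. Unset Strict Implicit. Unset Printing Implicit Defensive.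

Definition ndist (m n : nat) : nat := maxn (m - n) (n - m).

Definition simple_graph (V : finType) (e : rel V) : Prop :=
  symmetric e /\ irreflexive e.

Definition is_tree (V : finType) (e : rel V) : Prop :=
  [/\ simple_graph e,
      (forall x y : V, connect e x y) &
      (forall s : seq V, uniq s -> 2 < size s -> ~~ cycle e s)].

Definition bw_le_b (V : finType) (e : rel V) (k : nat) : bool :=
  [exists s : {ffun V -> 'I_#|V|},
     injectiveb s &&
     [forall u, forall v, e u v ==> (ndist (s u) (s v) <= k)]].

Lemma bw_exists (V : finType) (e : rel V) : exists k, bw_le_b e k.
Proof.
exists #|V|; apply/existsP; exists [ffun x => enum_rank x].
apply/andP; split.
  apply/injectiveP => x y; rewrite !ffunE; exact: enum_rank_inj.
apply/forallP => u; apply/forallP => v; apply/implyP => _.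
rewrite /ndist geq_max; apply/andP; split.
  exact: leq_trans (leq_subr _ _) (ltnW (ltn_ord _)).
exact: leq_trans (leq_subr _ _) (ltnW (ltn_ord _)).
Qed.

Definition bandwidth (V : finType) (e : rel V) : nat := ex_minn (bw_exists e).

Definition cone (V : finType) (e : rel V) : rel (option V) :=
  fun x y => match x, y with
             | Some u, Some v => e u v
             | None, Some _ | Some _, None => true
             | None, None => false
             end.

Definition crosses (a b c d : nat) : bool :=
  let i := minn a b in let j := maxn a b in
  let i' := minn c d in let j' := maxn c d in
  ((i < i') && (i' < j) && (j < j')) || ((i' < i) && (i < j') && (j' < j)).

(* Each edge {x',y'} is counted once, via the orientation
   with s x' < s y'. *)
Definition outer_k_planar (W : finType) (e : rel W) (k : nat) : Prop :=
  exists s : W -> 'I_#|W|, injective s /\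
    forall x y : W, e x y ->
      #|[set p : W * W | e p.1 p.2 && (s p.1 < s p.2)
                         && crosses (s x) (s y) (s p.1) (s p.2)]| <= k.

From mathcomp Require Import all_boot all_order.
From mathcomp Require Import zify.

Set Implicit Arguments.
Unset Strict Implicit.
Unset Printing Implicit Defensive.

(* Draw the cone with the apex w first, followed by the vertices of T in the order
   of a layout of bandwidth b.  Root T and charge every tree edge to its child
   endpoint, which determines it; an apex edge wm is determined by m.  An edge
   crossing xy has exactly one endpoint strictly between x and y, and tree edges
   have stretch at most b, so the charged vertices of the edges crossing wm lie
   within distance b - 1 of m on either side (2b - 2 edges), while those crossing
   a tree edge uv lie strictly between u and v or within distance b - 1 outside
   them (3(b - 1) tree edges and b - 1 apex edges).  Hence every edge is crossed
   at most 4b - 4 <= 5b - 5 times; with truncated subtraction this also holds for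
   b = 0. *)

Lemma card_le_size_inj_in (T : finType) (A : {set T}) (h : T -> nat) (s : seq nat) :
  {in A &, injective h} -> {in A, forall x, h x \in s} -> #|A| <= size s.
Proof.
move=> h_inj h_s; rewrite cardE -(size_map h); apply: uniq_leq_size.
  by rewrite map_inj_in_uniq ?enum_uniq // => x y; rewrite !mem_enum; apply: h_inj.
by move=> z /mapP [x]; rewrite mem_enum => /h_s h_x ->.
Qed.

Lemma bandwidth_order (V : finType) (e : rel V) (b : nat) : bandwidth e <= b ->
  exists2 s : V -> 'I_#|V|, injective s & forall u v, e u v -> ndist (s u) (s v) <= b.
Proof.
move=> bw_b; have : bw_le_b e (bandwidth e) by rewrite /bandwidth; case: ex_minnP.
case/existsP => s /andP [/injectiveP s_inj /forallP s_stretch].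
exists s => // u v euv; apply: leq_trans bw_b.
by have /forallP /(_ v) := s_stretch u; rewrite euv.
Qed.

Lemma outer_k_planar_of_positions (W : finType) (e : rel W) (k : nat) (f : W -> nat) :
  injective f -> (forall x, f x < #|W|) ->
  (forall x y, e x y -> #|[set p : W * W | e p.1 p.2 && (f p.1 < f p.2)
                          && crosses (f x) (f y) (f p.1) (f p.2)]| <= k) ->
  outer_k_planar e k.
Proof.
move=> f_inj f_lt f_cross; exists (fun x => Ordinal (f_lt x)); split.
  by move=> x y /(congr1 val) /f_inj.
exact: f_cross.
Qed.

Section TreeParent.
Variables (V : finType) (e : rel V).
Hypotheses (e_sym : symmetric e) (e_irr : irreflexive e).
Hypothesis e_acyclic : forall s : seq V, uniq s -> 2 < size s -> ~~ cycle e s.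

Definition del_edge (u v : V) : rel V :=
  [rel a b | e a b && ~~ ((a == u) && (b == v) || (a == v) && (b == u))].

Lemma del_edge_sym u v : symmetric (del_edge u v).
Proof.
move=> a b; rewrite /del_edge /= e_sym; congr (_ && ~~ _).
by case: (a == u) (a == v) (b == u) (b == v) => [] [] [] [].
Qed.

Lemma edge_not_connect_del_edge u v : e u v -> ~~ connect (del_edge u v) v u.
Proof.
move=> euv; apply/negP => /connectP [p p_path p_last].
case/shortenP: p_path p_last => [[|y [|z q]]] q_path q_uniq _ /= q_last.
- by move: euv; rewrite q_last e_irr.
- by move: q_path; rewrite -q_last /del_edge /= !eqxx orbT andbF.
- case/negP: (e_acyclic q_uniq isT).
  rewrite /cycle rcons_path /= -q_last euv andbT.
  by apply: sub_path q_path => a c /andP [].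
Qed.

Variable r : V.
Hypothesis e_conn : forall x, connect e r x.

Lemma depth_exists v :
  exists n, [exists p : n.-tuple V, path e r p && (last r p == v)].
Proof.
case/connectP: (e_conn v) => p p_path p_last.
by exists (size p); apply/existsP; exists (in_tuple p); rewrite /= p_path -p_last eqxx.
Qed.

Definition depth v := ex_minn (depth_exists v).

Lemma depth_le_size v p : path e r p -> last r p = v -> depth v <= size p.
Proof.
move=> p_path p_last; rewrite /depth; case: ex_minnP => n _; apply.
by apply/existsP; exists (in_tuple p); rewrite /= p_path p_last eqxx.
Qed.

Lemma depth_path v : exists2 p, path e r p & last r p = v /\ size p = depth v.
Proof.
rewrite /depth; case: ex_minnP => n /existsP [p /andP [p_path /eqP p_last]] _.
by exists (val p); last rewrite size_tuple.
Qed.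

Lemma depth_gt0 v : v != r -> 0 < depth v.
Proof.
apply: contraNT; rewrite -eqn0Ngt => /eqP d0.
case: (depth_path v) => p _ [p_last]; rewrite d0 => /size0nil p0.
by rewrite -p_last p0.
Qed.

Lemma exists_parent v : v != r -> exists u, e u v && (depth u < depth v).
Proof.
move=> /depth_gt0 dv; case: (depth_path v) => p + [].
case/lastP: p => [_ _ p0 | p x]; first by rewrite -p0 in dv.
rewrite rcons_path last_rcons size_rcons => /andP [p_path px] <- p_size.
exists (last r p); rewrite px -p_size ltnS.
exact: depth_le_size.
Qed.

Definition parent v := odflt r [pick u | e u v && (depth u < depth v)].

Lemma parentP v : v != r -> e (parent v) v /\ depth (parent v) < depth v.
Proof.
move=> vr; rewrite /parent; case: pickP => [u /andP [] //|none].
by case: (exists_parent vr) => u; rewrite none.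
Qed.

Lemma connect_root (f : rel V) :
  (forall x, x != r -> f x (parent x)) -> forall x, connect f x r.
Proof.
move=> f_parent x; elim: {x}(depth x) {-2}x (leqnn (depth x)) => [|n IH] x.
  by case: (eqVneq x r) => [-> | /depth_gt0]; [rewrite connect0 | case: depth].
case: (eqVneq x r) => [-> _ | xr dx]; first exact: connect0.
apply: connect_trans (connect1 (f_parent x xr)) (IH _ _).
by have [_] := parentP xr; lia.
Qed.

Lemma edge_parent u v : e u v -> parent u = v \/ parent v = u.
Proof.
move=> euv; case: (eqVneq (parent u) v) => [|pu]; first by left.
case: (eqVneq (parent v) u) => [|pv]; first by right.
have del_parent x : x != r -> del_edge u v x (parent x).
  move=> xr; have [ex _] := parentP xr; rewrite /del_edge /= e_sym ex /=.
  apply/negP => /orP [] /andP [/eqP -> /eqP p_x].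
  - by rewrite p_x eqxx in pu.
  - by rewrite p_x eqxx in pv.
case/negP: (edge_not_connect_del_edge euv).
apply: connect_trans (connect_root del_parent v) _.
by rewrite (sym_connect_sym (del_edge_sym u v)) connect_root.
Qed.

End TreeParent.

Lemma tree_parent_exists (V : finType) (e : rel V) :
  is_tree e -> exists par : V -> V, forall u v, e u v -> par u = v \/ par v = u.
Proof.
case=> [[e_sym e_irr] e_conn e_acyclic].
case: (pickP (@predT V)) => [r _ | V0]; last by exists id => u; have := V0 u.
by exists (parent (e_conn r)); apply: edge_parent.
Qed.

Section ConeCrossings.
Variables (V : finType) (e : rel V) (b : nat) (σ : V -> nat) (par : V -> V).
Hypothesis σ_inj : injective σ.
Hypothesis σ_stretch : forall u v, e u v -> ndist (σ u) (σ v) <= b.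
Hypothesis par_edge : forall u v, e u v -> par u = v \/ par v = u.

Definition cone_pos (x : option V) : nat := if x is Some v then (σ v).+1 else 0.

Definition child (a c : V) : V := if par a == c then a else c.

Definition edge_code (p : option V * option V) : nat :=
  match p with
  | (None, Some v) => 2 * σ v
  | (Some a, Some c) => (2 * σ (child a c)).+1
  | _ => 0
  end.

Definition oriented_edge : pred (option V * option V) :=
  [pred p | cone e p.1 p.2 && (cone_pos p.1 < cone_pos p.2)].

Definition crossing_edges (x y : option V) : {set option V * option V} :=
  [set p | oriented_edge p
           && crosses (cone_pos x) (cone_pos y) (cone_pos p.1) (cone_pos p.2)].

Lemma cone_pos_inj : injective cone_pos.
Proof. by move=> [u|] [v|] //= [/σ_inj ->]. Qed.

Lemma child_spec a c : e a c ->
  child a c = a /\ par a = c \/ child a c = c /\ par c = a.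
Proof.
rewrite /child => eac; case: eqP => [|pac]; first by left.
by right; case: (par_edge eac).
Qed.

Lemma edge_code_inj : {in oriented_edge &, injective edge_code}.
Proof.
move=> [[a|] [c|]] [[a'|] [c'|]]; rewrite !inE /= ?ltn0 ?andbF //;
  try by move=> _ _ /eqP; lia.
- move=> /andP [eac ac] /andP [eac' ac'] /eqP.
  rewrite eqSS eqn_pmul2l // => /eqP /σ_inj.
  by case: (child_spec eac) (child_spec eac')
    => [[-> pac] | [-> pac]] [[-> pac'] | [-> pac']] eq_child; subst; first [done | lia].
- by move=> _ _ /eqP; rewrite eqn_pmul2l // => /eqP /σ_inj ->.
Qed.

Lemma crossing_edges_oriented x y : {subset crossing_edges x y <= oriented_edge}.
Proof. by move=> p; rewrite inE => /andP []. Qed.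

Lemma crossing_edges_sym x y : crossing_edges y x = crossing_edges x y.
Proof.
by apply/setP => p; rewrite !inE /crosses /= (minnC (cone_pos x)) (maxnC (cone_pos x)).
Qed.

Lemma card_crossing_apex_edge v : #|crossing_edges None (Some v)| <= 2 * b - 2.
Proof.
pose near := iota ((σ v).+1 - b) (b - 1) ++ iota (σ v).+1 (b - 1).
apply: leq_trans (card_le_size_inj_in (s := [seq (2 * j).+1 | j <- near]) _ _) _.
- by apply: sub_in2 edge_code_inj => p /crossing_edges_oriented.
- move=> [[a|] [c|]]; rewrite !inE /oriented_edge /crosses /= ?ltn0 ?andbF //.
  move=> /andP [/andP [eac ac] cr]; apply: map_f.
  have := σ_stretch eac; rewrite /ndist => st.
  by case: (child_spec eac) => -[-> _]; rewrite mem_cat !mem_iota; lia.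
- by rewrite size_map size_cat !size_iota; lia.
Qed.

Lemma card_crossing_tree_edge u v :
  e u v -> #|crossing_edges (Some u) (Some v)| <= 4 * b - 4.
Proof.
move=> euv; have := σ_stretch euv; rewrite /ndist => st_uv.
pose lo := minn (σ u) (σ v); pose hi := maxn (σ u) (σ v).
pose inner := iota lo.+1 (b - 1).
pose near := iota (lo.+1 - b) (b - 1) ++ inner ++ iota hi.+1 (b - 1).
apply: leq_trans (card_le_size_inj_in
  (s := [seq 2 * j | j <- inner] ++ [seq (2 * j).+1 | j <- near]) _ _) _.
- by apply: sub_in2 edge_code_inj => p /crossing_edges_oriented.
- move=> [[a|] [c|]]; rewrite !inE /oriented_edge /crosses /= ?ltn0 ?andbF // mem_cat.
  + move=> /andP [/andP [eac ac] cr]; rewrite map_f ?orbT //.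
    have := σ_stretch eac; rewrite /ndist => st.
    by case: (child_spec eac) => -[-> _]; rewrite !mem_cat !mem_iota /lo /hi; lia.
  + by move=> cr; rewrite map_f // /inner mem_iota /lo; lia.
- by rewrite /near /inner size_cat !size_map !size_cat !size_iota; lia.
Qed.

Lemma card_crossing_edges x y : cone e x y -> #|crossing_edges x y| <= 4 * b - 4.
Proof.
case: x y => [u|] [v|] //= exy; first exact: card_crossing_tree_edge.
  by rewrite crossing_edges_sym; apply: leq_trans (card_crossing_apex_edge u) _; lia.
by apply: leq_trans (card_crossing_apex_edge v) _; lia.
Qed.

End ConeCrossings.

Theorem lemma5p7 (V : finType) (e : rel V) (b : nat) :
  is_tree e -> 1 <= b -> bandwidth e <= b ->
  outer_k_planar (cone e) (5 * b - 5).
Proof.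
move=> e_tree _ bw_b.
have [s s_inj s_stretch] := bandwidth_order bw_b.
have [par par_edge] := tree_parent_exists e_tree.
have σ_inj : injective (fun v => val (s v)) by move=> u v /val_inj /s_inj.
apply: (@outer_k_planar_of_positions _ _ _ (cone_pos (fun v => val (s v)))).
- exact: cone_pos_inj.
- by move=> [v|]; rewrite card_option //= ltnS.
- move=> x y exy.
  by apply: leq_trans (card_crossing_edges σ_inj s_stretch par_edge exy) _; lia.
Qed.
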